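(* Let $p\in\mathbb{R}^9$ with $\sum_i p(i)=1$, and let $\rho=\sum_{i=1}^9\left[4p(i)-\tfrac13\right]\Pi_i$. Then $\rho$ is a pure state (a rank-one orthogonal projector) if and only if $$\sum_{i=1}^9 p(i)^2=\frac16\quad\text{and}\quad \sum_{i=1}^9 p(i)^3=\frac12\sum_{(i,j,k)\in Q}p(i)p(j)p(k).$$
   Context: Let $\omega=e^{2\pi i/3}$ and let $|0\rangle,|1\rangle,|2\rangle$ be the standard basis of $\mathbb{C}^3$. Define $X|j\rangle=|j+1 \bmod 3\rangle$ and $Z|j\rangle=\omega^j|j\rangle$. Let $|\psi_0\rangle=\frac{1}{\sqrt2}(0,1,-1)^T$. For $m,n\in\{0,1,2\}$ put $i=3m+n+1$ and let $\Pi_i$ be the orthogonal projector onto $X^mZ^n|\psi_0\rangle$ (the canonical Hesse SIC); $\rho$ is the unique trace-one Hermitian operator with $p(i)=\frac13\operatorname{Tr}(\rho\Pi_i)$. Identify the index $i=3m+n+1$ with the point $(m,n)\in\mathbb{Z}_3^2$. The 12 lines of the affine plane $\mathbb{Z}_3^2$ are $\{1,2,3\},\{4,5,6\},\{7,8,9\},\{1,4,7\},\{2,5,8\},\{3,6,9\},\{1,5,9\},\{2,6,7\},\{3,4,8\},\{1,6,8\},\{2,4,9\},\{3,5,7\}$. $Q$ denotes the set of ordered triples $(i,j,k)$ of pairwise distinct indices with $\{i,j,k\}$ one of these lines. *)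

From HB Require Import structures.
From mathcomp Require Import all_boot all_order all_algebra all_field.
Set Implicit Arguments. Unset Strict Implicit. Unset Printing Implicit Defensive.
Import Order.TTheory GRing.Theory Num.Theory.
Local Open Scope ring_scope.

(* omega = e^{2 pi i/3} = -1/2 + i sqrt(3)/2 *)
Definition omega : algC := (-1 + 'i * sqrtC 3) / 2%:R.

(* shift X |j> = |j+1 mod 3>, clock Z |j> = omega^j |j> *)
Definition Xop : 'M[algC]_3 := \matrix_(i, j) ((i : nat) == (j.+1 %% 3)%N)%:R.
Definition Zop : 'M[algC]_3 := \matrix_(i, j) (((i : nat) == j)%:R * omega ^+ i).

Definition psi0 : 'cV[algC]_3 :=
  (sqrtC 2%:R)^-1 *: \col_(i < 3) (if (i : nat) == 1%N then 1 else if (i : nat) == 2%N then -1 else 0).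

Definition adj {m n} (A : 'M[algC]_(m, n)) : 'M[algC]_(n, m) := (map_mx (fun x => x^*) A)^T.

(* Index k : 'I_9 (0-based, k = i - 1 = 3m + n) corresponds to (m,n) = (k/3, k mod 3). *)
Definition sicvec (k : 'I_9) : 'cV[algC]_3 := Xop ^+ (k %/ 3) *m Zop ^+ (k %% 3) *m psi0.
Definition Pi (k : 'I_9) : 'M[algC]_3 := sicvec k *m adj (sicvec k).

(* the 12 lines of the affine plane, as listed in the paper (1-based) *)
Definition lines1 : seq (nat * nat * nat) :=
  [:: (1,2,3); (4,5,6); (7,8,9); (1,4,7); (2,5,8); (3,6,9);
      (1,5,9); (2,6,7); (3,4,8); (1,6,8); (2,4,9); (3,5,7)]%N.

Definition ix (a : nat) : 'I_9 := inord a.-1.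

Definition lines : seq {set 'I_9} :=
  [seq [set ix t.1.1; ix t.1.2; ix t.2] | t <- lines1].

Definition inQ (i j k : 'I_9) : bool :=
  [&& i != j, j != k, i != k & [set i; j; k] \in lines].

Definition rho_of (p : 'I_9 -> algC) : 'M[algC]_3 :=
  \sum_(i < 9) (4%:R * p i - 3%:R^-1) *: Pi i.

Definition pure_state (r : 'M[algC]_3) : Prop :=
  [/\ r *m r = r, adj r = r & \rank r = 1%N].

From HB Require Import structures.
From mathcomp Require Import all_boot all_order all_algebra all_field.
From mathcomp Require Import ring.
Import Order.TTheory GRing.Theory Num.Theory.
Local Open Scope ring_scope.

(* The proof separates a general fact about 3x3 matrices from a computation
   specific to the Hesse SIC.
   - General part: a Hermitian 3x3 matrix A of trace 1 is a pure state iff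
     Tr A^2 = Tr A^3 = 1.  One direction is immediate; for the other, the
     Cayley-Hamilton theorem written with traces (Newton identities) gives
     A^3 = A^2, so A^2 - A is a Hermitian matrix with vanishing square, hence
     zero; an idempotent has trace equal to its rank, so the rank is 1.
   - SIC part: the nine SIC vectors are written out explicitly, which gives
     rho = sum_i (4 p(i) - 1/3) Pi_i entrywise as affine functions of p with
     coefficients in Z[omega]; the traces of rho, rho^2, rho^3 follow as
     polynomial identities in p modulo omega^2 + omega + 1 = 0.  The cubic
     term involves the sum of p(i)p(j)p(k) over the 12 lines, and the sum over
     the ordered triples Q counts each line 6 times (checked by enumeration).
   With sum p = 1, Tr rho^2 - 1 and Tr rho^3 - 1 are nonzero multiples of the
   two defects in the statement, which gives the theorem. *)

Lemma adjE m n (A : 'M[algC]_(m, n)) i j : adj A i j = (A j i)^*.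
Proof. by rewrite !mxE. Qed.

Lemma adjK m n (A : 'M[algC]_(m, n)) : adj (adj A) = A.
Proof. by apply/matrixP => i j; rewrite !adjE conjCK. Qed.

Lemma adjM m n q (A : 'M[algC]_(m, n)) (B : 'M[algC]_(n, q)) :
  adj (A *m B) = adj B *m adj A.
Proof. by rewrite /adj map_mxM trmx_mul. Qed.

Lemma adj0 m n : adj (0 : 'M[algC]_(m, n)) = 0.
Proof. by apply/matrixP => i j; rewrite !mxE conjC0. Qed.

Lemma adjD m n (A B : 'M[algC]_(m, n)) : adj (A + B) = adj A + adj B.
Proof. by apply/matrixP => i j; rewrite !mxE rmorphD. Qed.

Lemma adjB m n (A B : 'M[algC]_(m, n)) : adj (A - B) = adj A - adj B.
Proof. by apply/matrixP => i j; rewrite !mxE rmorphB. Qed.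

Lemma adjZ m n a (A : 'M[algC]_(m, n)) : adj (a *: A) = a^* *: adj A.
Proof. by apply/matrixP => i j; rewrite !mxE rmorphM. Qed.

(* A Hermitian matrix whose square vanishes is zero: the diagonal of B B^*
   consists of the squared norms of the rows of B. *)
Lemma hermitian_sqr_eq0 n (B : 'M[algC]_n) : adj B = B -> B *m B = 0 -> B = 0.
Proof.
move=> hermB sqrB0; apply/matrixP => i j; rewrite mxE.
have /eqP := congr1 (fun M : 'M[algC]_n => M i i) sqrB0.
rewrite !mxE (eq_bigr (fun l => `|B i l| ^+ 2)) => [|l _]; last first.
  by rewrite -{2}hermB adjE normCK.
rewrite psumr_eq0 => [/allP/(_ j (mem_index_enum j))|l _]; last exact: exprn_ge0.
by rewrite /= sqrf_eq0 normr_eq0 => /eqP.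
Qed.

(* The trace of an idempotent matrix is its rank: factor A = C R through its
   rank, then R C = 1 and Tr A = Tr (R C). *)
Lemma mxtrace_idem n (A : 'M[algC]_n) : A *m A = A -> \tr A = (\rank A)%:R.
Proof.
move=> idemA; have baseA : col_base A *m row_base A = A := mulmx_base A.
have invA : row_base A *m col_base A = 1%:M.
  apply: (row_free_inj (row_base_free A)); apply: (row_full_inj (col_base_full A)).
  move: baseA; move: (col_base A) (row_base A) => C R baseA.
  by rewrite mul1mx !mulmxA baseA -mulmxA baseA idemA.
by rewrite -{1}baseA mxtrace_mulC invA mxtrace1.
Qed.

(* Case analysis on the three indices of a qutrit, in the form produced by
   expanding sums with [big_ord_recl]. *)
Lemma ord3_ind (P : 'I_3 -> Prop) :
  P ord0 -> P (lift ord0 ord0) -> P (lift ord0 (lift ord0 ord0)) -> forall i, P i.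
Proof.
by move=> P0 P1 P2 [[|[|[|//]]] lti]; [move: P0 | move: P1 | move: P2]; congr P; apply: val_inj.
Qed.

(* Cayley-Hamilton for 3x3 matrices, with the coefficients of the
   characteristic polynomial expressed through Tr A, Tr A^2, Tr A^3. *)
Lemma cayley_hamilton3 (A : 'M[algC]_3) :
  6%:R *: (A *m A *m A) =
  (6%:R * \tr A) *: (A *m A) - (3%:R * (\tr A ^+ 2 - \tr (A *m A))) *: A
  + (\tr A ^+ 3 - 3%:R * \tr A * \tr (A *m A) + 2%:R * \tr (A *m A *m A))%:M.
Proof.
apply/matrixP => i j; elim/ord3_ind: i; elim/ord3_ind: j;
  rewrite !mxE /mxtrace !big_ord_recl !big_ord0 !mxE !big_ord_recl !big_ord0 !mxE
    !big_ord_recl !big_ord0 /=; ring.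
Qed.

Lemma pure_state_traces (A : 'M[algC]_3) : adj A = A -> \tr A = 1 ->
  pure_state A <-> \tr (A *m A) = 1 /\ \tr (A *m A *m A) = 1.
Proof.
move=> hermA trA; split=> [[idemA _ _] | [tr2 tr3]]; first by rewrite !idemA.
have cubeA : A *m A *m A = A *m A.
  apply: (scalerI (a := 6%:R : algC)); first by rewrite pnatr_eq0.
  rewrite cayley_hamilton3 trA tr2 tr3 !expr1n !mulr1 subrr mulr0 scale0r subr0.
  by rewrite (_ : 1 - 3%:R + 2%:R = 0 :> algC) ?raddf0 ?addr0 //; ring.
have idemA : A *m A = A.
  apply/eqP; rewrite -subr_eq0; apply/eqP/hermitian_sqr_eq0.
    by rewrite adjB adjM hermA.
  by rewrite !mulmxE mulrBl !mulrBr !mulrA -!mulmxE !cubeA !subrr.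
by split=> //; apply/eqP; rewrite -(eqr_nat algC) -mxtrace_idem // trA.
Qed.

Lemma omega_sqr : omega ^+ 2 = -1 - omega.
Proof.
have sqrt3 : sqrtC 3%:R ^+ 2 = 3%:R :> algC by rewrite sqrtCK.
by rewrite /omega; field: (@sqrCi algC) sqrt3.
Qed.

Lemma omega_cube : omega ^+ 3 = 1.
Proof. by rewrite exprS omega_sqr; ring: omega_sqr. Qed.

Lemma conj_omega : omega^* = omega ^+ 2.
Proof.
have conj_sqrt3 : (sqrtC 3%:R : algC)^* = sqrtC 3%:R.
  by apply/CrealP/ger0_real; rewrite sqrtC_ge0 ler0n.
rewrite omega_sqr /omega rmorphM rmorphD rmorphN rmorph1 rmorphM /= conjCi conj_sqrt3.
by rewrite fmorphV /= rmorph_nat; field.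
Qed.

Definition col3 (a b c : algC) : 'cV[algC]_3 := \col_i [:: a; b; c]`_i.

Definition mx3 (r : seq (seq algC)) : 'M[algC]_3 := \matrix_(i, j) (nth [::] r i)`_j.

Lemma Xop_col3 a b c : Xop *m col3 a b c = col3 c a b.
Proof.
apply/matrixP => i j; elim/ord3_ind: i;
  by rewrite !mxE !big_ord_recl !big_ord0 !mxE /=; ring.
Qed.

Lemma Zop_col3 a b c : Zop *m col3 a b c = col3 a (omega * b) (omega ^+ 2 * c).
Proof.
apply/matrixP => i j; elim/ord3_ind: i;
  by rewrite !mxE !big_ord_recl !big_ord0 !mxE /=; ring.
Qed.

(* The orbit of the (unnormalised) fiducial vector (0, 1, -1) under X^m Z^n,
   listed in the order k = 3m + n. *)
Definition fiducial_orbit (k : nat) : 'cV[algC]_3 :=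
  nth 0 [:: col3 0 1 (-1); col3 0 omega (- omega ^+ 2); col3 0 (omega ^+ 2) (- omega);
            col3 (-1) 0 1; col3 (- omega ^+ 2) 0 omega; col3 (- omega) 0 (omega ^+ 2);
            col3 1 (-1) 0; col3 omega (- omega ^+ 2) 0; col3 (omega ^+ 2) (- omega) 0] k.

Lemma sicvecE (k : 'I_9) : sicvec k = (sqrtC 2%:R)^-1 *: fiducial_orbit k.
Proof.
rewrite /sicvec (_ : psi0 = (sqrtC 2%:R)^-1 *: col3 0 1 (-1)); last first.
  by congr (_ *: _); apply/matrixP => i j; rewrite !mxE; elim/ord3_ind: i.
rewrite -scalemxAr; congr (_ *: _).
case: k => [[|[|[|[|[|[|[|[|[|//]]]]]]]]] hk]; rewrite /divn /modn /fiducial_orbit /=.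
all: rewrite -mulmxA ?expr0 ?expr2 -?mulmxE ?mul1mx -?mulmxA ?(Zop_col3, Xop_col3).
all: by congr col3; ring: omega_cube.
Qed.

Lemma Pi_entry (k : 'I_9) i j :
  Pi k i j = 2%:R^-1 * (fiducial_orbit k i 0 * (fiducial_orbit k j 0)^*).
Proof.
have conj_sqrt2 : (sqrtC 2%:R : algC)^* = sqrtC 2%:R.
  by apply/CrealP/ger0_real; rewrite sqrtC_ge0 ler0n.
rewrite /Pi sicvecE !mxE big_ord1 !mxE rmorphM fmorphV /= conj_sqrt2.
by rewrite mulrACA -invfM -expr2 sqrtCK.
Qed.

Lemma Pi_hermitian (k : 'I_9) : adj (Pi k) = Pi k.
Proof. by rewrite /Pi adjM adjK. Qed.

Lemma rho_of_hermitian (p : 'I_9 -> algC) :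
  (forall i, p i \is Num.real) -> adj (rho_of p) = rho_of p.
Proof.
move=> preal; rewrite /rho_of (big_morph _ (@adjD 3 3) (@adj0 3 3)).
apply: eq_bigr => k _; rewrite adjZ Pi_hermitian; congr (_ *: _).
by apply/CrealP; rewrite rpredB ?rpredM ?rpredV ?rpred_nat.
Qed.

Lemma sum9 (F : 'I_9 -> algC) : \sum_(i < 9) F i = F (inord 0) + F (inord 1) + F (inord 2)
  + F (inord 3) + F (inord 4) + F (inord 5) + F (inord 6) + F (inord 7) + F (inord 8).
Proof.
rewrite !big_ord_recl big_ord0 addr0 !addrA.
by congr (F _ + F _ + F _ + F _ + F _ + F _ + F _ + F _ + F _); apply/val_inj; rewrite /= inordK.
Qed.

Lemma rho_ofE (p : 'I_9 -> algC) : rho_of p = mx3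
  [:: [:: -1 + 2%:R * (p (inord 3) + p (inord 4) + p (inord 5) + p (inord 6) + p (inord 7) + p (inord 8));
          2%:R * (p (inord 7) - p (inord 6)) + 2%:R * (p (inord 7) - p (inord 8)) * omega;
          2%:R * (p (inord 5) - p (inord 3)) + 2%:R * (p (inord 5) - p (inord 4)) * omega];
      [:: 2%:R * (p (inord 8) - p (inord 6)) + 2%:R * (p (inord 8) - p (inord 7)) * omega;
          -1 + 2%:R * (p (inord 0) + p (inord 1) + p (inord 2) + p (inord 6) + p (inord 7) + p (inord 8));
          2%:R * (p (inord 1) - p (inord 0)) + 2%:R * (p (inord 1) - p (inord 2)) * omega];
      [:: 2%:R * (p (inord 4) - p (inord 3)) + 2%:R * (p (inord 4) - p (inord 5)) * omega;
          2%:R * (p (inord 2) - p (inord 0)) + 2%:R * (p (inord 2) - p (inord 1)) * omega;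
          -1 + 2%:R * (p (inord 0) + p (inord 1) + p (inord 2) + p (inord 3) + p (inord 4) + p (inord 5))]].
Proof.
apply/matrixP => i j; rewrite /rho_of summxE.
under eq_bigr => k _ do rewrite mxE Pi_entry.
rewrite sum9 /fiducial_orbit !inordK //.
elim/ord3_ind: i; elim/ord3_ind: j;
  rewrite /= !mxE /= ?(rmorphN, rmorph1, rmorph0, rmorphXn) /= ?conj_omega.
all: by field: omega_sqr.
Qed.

Definition line_sum (p : 'I_9 -> algC) : algC :=
  \sum_(t <- lines1) p (ix t.1.1) * p (ix t.1.2) * p (ix t.2).

Lemma trace_rho (p : 'I_9 -> algC) : \tr (rho_of p) = 4%:R * (\sum_(i < 9) p i) - 3%:R.
Proof.
by rewrite sum9 rho_ofE /mxtrace !big_ord_recl !big_ord0 !mxE /=; ring.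
Qed.

Lemma trace_rho2 (p : 'I_9 -> algC) : \tr (rho_of p *m rho_of p) =
  12%:R * (\sum_(i < 9) p i ^+ 2) + 4%:R * (\sum_(i < 9) p i) ^+ 2 - 8%:R * (\sum_(i < 9) p i) + 3%:R.
Proof.
rewrite !sum9 rho_ofE /mxtrace !big_ord_recl !big_ord0 !mxE !big_ord_recl !big_ord0 !mxE /=.
by ring: omega_sqr.
Qed.

Lemma trace_rho3 (p : 'I_9 -> algC) : \tr (rho_of p *m rho_of p *m rho_of p) =
  24%:R * (\sum_(i < 9) p i ^+ 3) - 72%:R * line_sum p
  + 36%:R * (\sum_(i < 9) p i) * (\sum_(i < 9) p i ^+ 2) + 4%:R * (\sum_(i < 9) p i) ^+ 3
  - 12%:R * (\sum_(i < 9) p i) ^+ 2 - 36%:R * (\sum_(i < 9) p i ^+ 2) + 12%:R * (\sum_(i < 9) p i) - 3%:R.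
Proof.
rewrite !sum9 rho_ofE /mxtrace !big_ord_recl !big_ord0 !mxE !big_ord_recl !big_ord0 !mxE.
rewrite !big_ord_recl !big_ord0 !mxE /= /line_sum /lines1 !big_cons big_nil /ix /=.
by ring: omega_sqr.
Qed.

Definition eq3 {T : eqType} (a b c i j k : T) : bool :=
  all (mem [:: i; j; k]) [:: a; b; c] && all (mem [:: a; b; c]) [:: i; j; k].

Lemma set3_eqE (T : finType) (a b c i j k : T) :
  ([set a; b; c] == [set i; j; k]) = eq3 a b c i j k.
Proof.
by rewrite eqEsubset !subUset !sub1set /eq3 /= !inE ?orbF ?andbT !orbA !andbA.
Qed.

(* Membership in Q, transported to 0-based natural-number indices, where it
   can be decided by evaluation. *)
Definition lines0 : seq (nat * nat * nat) := [seq (t.1.1.-1, t.1.2.-1, t.2.-1) | t <- lines1].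

Definition inQn (i j k : nat) : bool :=
  [&& i != j, j != k, i != k & has (fun t => eq3 t.1.1 t.1.2 t.2 i j k) lines0].

Lemma inQ_nat (i j k : 'I_9) : inQ i j k = inQn i j k.
Proof.
rewrite /inQ /inQn /lines -has_pred1 has_map; congr [&& _, _, _ & _].
by rewrite /lines0 /lines1 /= !set3_eqE /eq3 /= !inE -!val_eqE /= !inordK.
Qed.

Definition perms3 {T : Type} (t : T * T * T) : seq (T * T * T) :=
  let: (a, b, c) := t in [:: (a, b, c); (a, c, b); (b, a, c); (b, c, a); (c, a, b); (c, b, a)].

Definition triples9 : seq (nat * nat * nat) :=
  [seq (ij, k) | ij <- [seq (i, j) | i <- index_iota 0 9, j <- index_iota 0 9],
                 k <- index_iota 0 9].

Fact Q_orderings :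
  perm_eq [seq t <- triples9 | inQn t.1.1 t.1.2 t.2] (flatten (map perms3 lines0)).
Proof. by vm_compute. Qed.

Lemma Q_sum (p : 'I_9 -> algC) :
  \sum_(i < 9) \sum_(j < 9) \sum_(k < 9 | inQ i j k) p i * p j * p k = 6%:R * line_sum p.
Proof.
pose g (t : nat * nat * nat) := p (inord t.1.1) * p (inord t.1.2) * p (inord t.2).
transitivity (\sum_(t <- triples9 | inQn t.1.1 t.1.2 t.2) g t).
  rewrite [RHS]big_mkcond /triples9 !big_allpairs big_mkord; apply: eq_bigr => i _.
  rewrite big_mkord; apply: eq_bigr => j _; rewrite big_mkord big_mkcond.
  by apply: eq_bigr => k _; rewrite inQ_nat /g /= !inord_val.
rewrite -big_filter (perm_big _ Q_orderings) big_flatten big_map /lines0 big_map.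
rewrite /line_sum mulr_sumr; apply: eq_bigr => -[[a b] c] _.
by rewrite /= !big_cons big_nil /g /ix /=; ring.
Qed.

Lemma eq1_iff_scaled {u v w c : algC} : u - 1 = c * (v - w) -> c != 0 -> (u = 1 <-> v = w).
Proof.
move=> defect c_neq0; split=> [u1 | vw]; last by apply/eqP; rewrite -subr_eq0 defect vw subrr mulr0.
apply/eqP; rewrite -subr_eq0; apply/eqP.
by move: defect; rewrite u1 subrr => /esym/eqP; rewrite mulf_eq0 (negPf c_neq0) => /eqP.
Qed.

Theorem mainTheorem4 (p : 'I_9 -> algC)
  (preal : forall i, p i \is Num.real)
  (psum : \sum_(i < 9) p i = 1) :
  pure_state (rho_of p) <->
  (\sum_(i < 9) p i ^+ 2 = 6%:R^-1 /\
   \sum_(i < 9) p i ^+ 3 =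
     2%:R^-1 * \sum_(i < 9) \sum_(j < 9) \sum_(k < 9 | inQ i j k) p i * p j * p k).
Proof.
have tr1 : \tr (rho_of p) = 1 by rewrite trace_rho psum; ring.
have defect2 : \tr (rho_of p *m rho_of p) - 1 = 12%:R * (\sum_(i < 9) p i ^+ 2 - 6%:R^-1).
  by rewrite trace_rho2 psum; field.
have defect3 : \tr (rho_of p *m rho_of p *m rho_of p) - 1 = 24%:R * (\sum_(i < 9) p i ^+ 3 -
    2%:R^-1 * \sum_(i < 9) \sum_(j < 9) \sum_(k < 9 | inQ i j k) p i * p j * p k).
  by rewrite trace_rho3 Q_sum psum; field.
have := eq1_iff_scaled defect2; rewrite pnatr_eq0 => /(_ isT) tr2E.
have := eq1_iff_scaled defect3; rewrite pnatr_eq0 => /(_ isT) tr3E.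
rewrite pure_state_traces ?rho_of_hermitian //.
by split=> -[/tr2E h2 /tr3E h3].
Qed.
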